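(* Let $X$ be a vector space over a field $\mathbb{k}$ and let $T:X\to X$ be a $\mathbb{k}$-linear map. Then $T$ has no non-trivial finite dimensional invariant subspaces if and only if there exist a set $A$, a subspace $Y$ of $\mathcal{R}^{(A)}$ invariant under $M^{(A)}$, and a linear bijection $J:X\to Y$ such that $JTx=M^{(A)}Jx$ for all $x\in X$ (i.e. $T$ is similar to the restriction of $M^{(A)}$ to an invariant subspace).
   Context: $\mathcal{R}=\mathbb{k}(t)$ is the field of rational functions in one variable over $\mathbb{k}$, and $M:\mathcal{R}\to\mathcal{R}$ is the $\mathbb{k}$-linear map $Mf(z)=zf(z)$. For a set $A$, $\mathcal{R}^{(A)}=\{f\in\mathcal{R}^A:\{\alpha\in A:f_\alpha\neq0\}\text{ is finite}\}$ is the algebraic direct sum of copies of $\mathcal{R}$ indexed by $A$, and $M^{(A)}:\mathcal{R}^{(A)}\to\mathcal{R}^{(A)}$ is defined by $(M^{(A)}f)_\alpha=Mf_\alpha$ for each $\alpha\in A$. A non-trivial subspace means a subspace different from $\{0\}$; a subspace $L$ is invariant for $T$ if $T(L)\subseteq L$. *)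

From HB Require Import structures.
From mathcomp Require Import all_boot all_order all_algebra.
From Stdlib Require Lists.List.
Set Implicit Arguments. Unset Strict Implicit. Unset Printing Implicit Defensive.
Import Order.TTheory GRing.Theory Num.Theory.
Local Open Scope ring_scope.

(* The field R = k(t) of rational functions in one variable over k. *)
Definition ratfun (k : fieldType) : Type := {fraction {poly k}}.

Definition poly2rat (k : fieldType) (p : {poly k}) : {fraction {poly k}} :=
  @tofrac {poly k} p.

Definition rscale (k : fieldType) (c : k) (f : {fraction {poly k}}) :
  {fraction {poly k}} := poly2rat c%:P * f.

Definition Mop (k : fieldType) (f : {fraction {poly k}}) : {fraction {poly k}} :=
  poly2rat 'X * f.

Definition finsupp (k : fieldType) (A : Type) (f : A -> {fraction {poly k}}) : Prop :=
  exists s : list A, forall a, f a <> 0 -> List.In a s.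

Definition MA (k : fieldType) (A : Type) (f : A -> {fraction {poly k}}) :
  A -> {fraction {poly k}} := fun a => Mop (f a).

Definition is_subspace_RA (k : fieldType) (A : Type)
  (Y : (A -> {fraction {poly k}}) -> Prop) : Prop :=
  (forall f, Y f -> finsupp f) /\
  Y (fun _ => 0) /\
  (forall (c : k) f g, Y f -> Y g -> Y (fun a => rscale c (f a) + g a)).

Definition is_subspace (k : fieldType) (X : lmodType k) (L : X -> Prop) : Prop :=
  L 0 /\ (forall (c : k) x y, L x -> L y -> L (c *: x + y)).

Definition fin_dim (k : fieldType) (X : lmodType k) (L : X -> Prop) : Prop :=
  exists s : seq X, (forall x, x \in s -> L x) /\
    (forall x, L x -> exists c : 'I_(size s) -> k, x = \sum_(i < size s) c i *: s`_i).

Definition nontrivial (k : fieldType) (X : lmodType k) (L : X -> Prop) : Prop :=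
  exists x, L x /\ x <> 0.

Definition is_invariant (X : Type) (T : X -> X) (L : X -> Prop) : Prop :=
  forall x, L x -> L (T x).

From HB Require Import structures.
From mathcomp Require Import all_boot all_order all_algebra.
From mathcomp Require Import boolp classical_sets.
Set Implicit Arguments. Unset Strict Implicit.
Import GRing.Theory.
Local Open Scope ring_scope.
Local Notation "x %:F" := (@tofrac _ x).

(* X is a k[t]-module via p . x := p(T) x, and T has no nontrivial finite
   dimensional invariant subspace iff this module is torsion free: a vector
   x killed by p != 0 generates the invariant subspace spanned by
   x, Tx, ..., T^(deg p - 1) x, while n + 1 iterates inside an
   n-dimensional invariant subspace are dependent.  A torsion-free module
   embeds into k(t)^(S) for a maximal k[t]-independent set S (Zorn): every x
   satisfies q x = sum_a p_a a with q != 0, and x |-> (p_a / q)_a is well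
   defined, injective, and turns T into multiplication by t.  Conversely, an
   embedding J intertwining T and M^(A) satisfies J (p(T) x) = p J x, which
   forces torsion-freeness. *)

Lemma span_dependent (k : fieldType) (X : lmodType k) (s : seq X)
    (v : 'I_(size s).+1 -> X) :
  (forall i, exists c : 'I_(size s) -> k, v i = \sum_l c l *: s`_l) ->
  exists2 u : 'rV[k]_(size s).+1, u != 0 & \sum_i u 0 i *: v i = 0.
Proof.
move=> /choice[C defv]; pose M := \matrix_(i, l) C i l.
pose u := nz_row (kermx M).
have uM : u *m M = 0 by apply/sub_kermxP; exact: nz_row_sub.
exists u.
  by rewrite nz_row_eq0 -mxrank_eq0 mxrank_ker subn_eq0 -ltnNge ltnS rank_leq_col.
under eq_bigr => i _ do rewrite defv scaler_sumr.
rewrite exchange_big big1 // => l _.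
under eq_bigr => i _ do rewrite scalerA; rewrite -scaler_suml.
have -> : \sum_i u 0 i * C i l = (u *m M) 0 l.
  by rewrite mxE; apply: eq_bigr => i _; rewrite mxE.
by rewrite uM mxE scale0r.
Qed.

Section PolyAction.
Variables (k : fieldType) (X : lmodType k) (T : {linear X -> X}).

Lemma iter_linearP n c (x y : X) :
  iter n T (c *: x + y) = c *: iter n T x + iter n T y.
Proof. by elim: n => //= n ->; rewrite linearP. Qed.

Definition pact (p : {poly k}) (x : X) := \sum_(i < size p) p`_i *: iter i T x.

Lemma pact_is_linear p : linear (pact p).
Proof.
move=> c x y; rewrite /pact scaler_sumr -big_split; apply: eq_bigr => i _.
by rewrite iter_linearP scalerDr !scalerA mulrC.
Qed.

HB.instance Definition _ p :=
  GRing.isLinear.Build k X X *:%R (pact p) (pact_is_linear p).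

Lemma pact_widen n (p : {poly k}) x :
  (size p <= n)%N -> pact p x = \sum_(i < n) p`_i *: iter i T x.
Proof.
move=> le_p_n; rewrite /pact (big_ord_widen n (fun i => p`_i *: iter i T x)) //.
rewrite big_mkcond; apply: eq_bigr => i _.
by case: ltnP => // le_p_i; rewrite nth_default // scale0r.
Qed.

Lemma pact0 x : pact 0 x = 0.
Proof. by rewrite /pact size_poly0 big_ord0. Qed.

Lemma pactD p q x : pact (p + q) x = pact p x + pact q x.
Proof.
pose n := maxn (size p) (size q).
rewrite !(@pact_widen n) ?leq_maxl ?leq_maxr ?size_polyD // -big_split.
by apply: eq_bigr => i _; rewrite coefD scalerDl.
Qed.

Lemma pactZ c p x : pact (c *: p) x = c *: pact p x.
Proof.
rewrite (@pact_widen (size p)) ?size_scale_leq // /pact scaler_sumr.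
by apply: eq_bigr => i _; rewrite coefZ scalerA.
Qed.

Lemma pactN p x : pact (- p) x = - pact p x.
Proof. by rewrite -(scaleN1r p) pactZ scaleN1r. Qed.

Lemma pactB p q x : pact (p - q) x = pact p x - pact q x.
Proof. by rewrite pactD pactN. Qed.

Lemma pactC c x : pact c%:P x = c *: x.
Proof. by rewrite (@pact_widen 1) ?size_polyC ?leq_b1 // big_ord1 coefC. Qed.

Lemma pact1 x : pact 1 x = x.
Proof. by rewrite -polyC1 pactC scale1r. Qed.

Lemma pactXM p x : pact ('X * p) x = T (pact p x).
Proof.
rewrite (@pact_widen (size p).+1); last first.
  by rewrite (leq_trans (size_polyMleq _ _)) // size_polyX.
rewrite big_ord_recl coefXM scale0r add0r /pact linear_sum.
by apply: eq_bigr => i _; rewrite coefXM linearZ.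
Qed.

Lemma pact_comm p x : pact p (T x) = T (pact p x).
Proof.
rewrite /pact linear_sum; apply: eq_bigr => i _.
by rewrite -iterSr iterS linearZ.
Qed.

Lemma pactM p q x : pact (p * q) x = pact p (pact q x).
Proof.
elim/poly_ind: p q x => [|p c IH] q x; first by rewrite mul0r !pact0.
rewrite mulrDl -mulrA mul_polyC pactD IH pactXM pactZ pactD.
by rewrite (mulrC p) pactXM pact_comm pactC.
Qed.

Lemma pactXn n x : pact 'X^n x = iter n T x.
Proof. by elim: n => [|n IH]; rewrite ?expr0 ?pact1 // exprS pactXM IH. Qed.

Definition torsion_free := forall p x, p != 0 -> pact p x = 0 -> x = 0.

Definition has_fin_dim_invariant :=
  exists L, [/\ is_subspace L, nontrivial L, fin_dim L & is_invariant T L].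

Lemma torsion_free_of_no_invariant : ~ has_fin_dim_invariant -> torsion_free.
Proof.
move=> noL p x p0 px; apply: contra_notP noL => x0.
have d_gt0 : (0 < (size p).-1)%N.
  case: (ltnP 1 (size p)) => [|/size1_polyC pC]; first by case: (size p) => [|[]].
  move: px p0; rewrite pC pactC => /eqP; rewrite scaler_eq0.
  by case/orP=> [/eqP ->|/eqP/x0 //]; rewrite eqxx.
set d := (size p).-1 in d_gt0.
exists (fun y => exists2 q : {poly k}, (size q <= d)%N & y = pact q x); split.
- split; first by exists 0; rewrite ?size_poly0 ?pact0.
  move=> c _ _ [q q_d ->] [q' q'_d ->]; exists (c *: q + q'); last by rewrite pactD pactZ.
  by rewrite (leq_trans (size_polyD _ _)) // geq_max q'_d (leq_trans (size_scale_leq _ _)).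
- by exists x; split=> //; exists 1; rewrite ?size_poly1 ?pact1.
- exists (mkseq (fun i => iter i T x) d); split.
    move=> y /mapP[i]; rewrite mem_iota => /andP[_ lt_i_d] ->.
    by exists 'X^i; rewrite ?size_polyXn ?pactXn.
  move=> _ [q q_d ->]; rewrite size_mkseq; exists (fun i => q`_i).
  by rewrite (pact_widen _ q_d); apply: eq_bigr => i _; rewrite nth_mkseq.
- move=> _ [q _ ->]; exists (('X * q) %% p).
    by rewrite -ltnS /d prednK ?ltn_modp // size_poly_gt0.
  by rewrite -pactXM {1}(divp_eq ('X * q) p) pactD pactM px linear0 add0r.
Qed.

Lemma no_invariant_of_torsion_free : torsion_free -> ~ has_fin_dim_invariant.
Proof.
move=> tf [L [_ [x [Lx x0]] [s [_ spanL]] invL]]; apply: x0.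
have L_iter i : L (iter i T x) by elim: i => //= i; apply: invL.
have [u u0 dep_u] := span_dependent (v := fun i => iter i T x)
  (fun i => spanL _ (L_iter i)).
pose p := \poly_(i < (size s).+1) u 0 (inord i).
apply: (tf p).
  apply: contraNneq u0 => p0; apply/eqP/rowP => j; rewrite mxE.
  by have := congr1 (coefp j) p0; rewrite /= coef_poly ltn_ord inord_val coef0.
rewrite (pact_widen _ (size_poly _ _)) -[RHS]dep_u; apply: eq_bigr => i _.
by rewrite coef_poly ltn_ord inord_val.
Qed.

End PolyAction.

Lemma big_uniq_widen (I : eqType) (V : nmodType) (s u : seq I) (F : I -> V) :
  uniq s -> uniq u -> {subset s <= u} -> (forall a, a \notin s -> F a = 0) ->
  \sum_(a <- u) F a = \sum_(a <- s) F a.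
Proof.
move=> us uu su F0.
rewrite (eq_bigr (fun a => if a \in s then F a else 0)); last first.
  by move=> a _; case: ifP => // /negbT /F0.
rewrite -big_mkcond -big_filter; apply: perm_big.
apply: uniq_perm; rewrite ?filter_uniq // => a.
by rewrite mem_filter; case: (boolP (a \in s)) => // /su ->.
Qed.

Lemma mem_In (T : eqType) (a : T) (s : seq T) : a \in s -> List.In a s.
Proof. by elim: s => //= b s IH; rewrite inE => /orP[/eqP ->|/IH]; [left|right]. Qed.

Section MaximalIndependent.
Variables (k : fieldType) (X : lmodType k) (T : {linear X -> X}).

Definition independent (S : set X) := forall (s : seq X) (p : X -> {poly k}),
  uniq s -> (forall a, a \in s -> S a) -> \sum_(a <- s) pact T (p a) a = 0 ->
  forall a, a \in s -> p a = 0.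

(* The relation x = \sum_(a <- s) (p a / q) a over k(t), with denominators cleared. *)
Definition represents (S : set X) x q s (p : X -> {poly k}) :=
  [/\ q != 0, uniq s, forall a, a \in s -> S a, forall a, a \notin s -> p a = 0
    & pact T q x = \sum_(a <- s) pact T (p a) a].

Lemma chain_bigcup_seq (F : set (set X)) (s : seq X) :
  total_on F subset -> (forall a, a \in s -> (\bigcup_(Y in F) Y)%classic a) ->
  s = [::] \/ exists2 Y, F Y & forall a, a \in s -> Y a.
Proof.
move=> totF; elim: s => [|a s IH] sF; first by left.
right; have [Ya FYa Yaa] := sF a (mem_head _ _).
have [->|[Ys FYs Yss]] := IH (fun b bs => sF b (mem_behead (s := a :: s) bs)).
  by exists Ya => // b; rewrite inE => /eqP ->.
have [YaYs|YsYa] := totF _ _ FYa FYs.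
  by exists Ys => // b; rewrite inE => /orP[/eqP ->|/Yss //]; apply: YaYs.
by exists Ya => // b; rewrite inE => /orP[/eqP ->|/Yss /YsYa].
Qed.

Lemma exists_maximal_independent :
  exists S, independent S /\ forall B, (S `<` B)%classic -> ~ independent B.
Proof.
apply: Zorn_bigcup => F indF totF s p us sF s0 a a_s.
have [s_nil|[Y FY sY]] := chain_bigcup_seq totF sF; first by rewrite s_nil in a_s.
exact: (indF _ FY s p us sY s0).
Qed.

Lemma maximal_independent_represents S :
  independent S -> (forall B, (S `<` B)%classic -> ~ independent B) ->
  forall x, exists q s p, represents S x q s p.
Proof.
move=> indS maxS x; have [Sx|Sx] := pselect (S x).
  exists 1, [:: x], (fun a => if a == x then 1 else 0); split.
  - exact: oner_neq0.
  - by [].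
  - by move=> a; rewrite inE => /eqP ->.
  - by move=> a; rewrite inE => /negbTE ->.
  - by rewrite big_seq1 eqxx.
(* In a relation on S `|` [set x], the coefficient of x is nonzero unless the
   relation lives on S. *)
apply: contra_notP (maxS (S `|` [set x])%classic _) => [norep|]; last first.
  by split=> [y Sy|/(_ x (or_intror erefl))//]; left.
move=> s p us sSx s0 a a_s.
have [x_s|x_s] := boolP (x \in s); last first.
  apply: (indS s p us) s0 a a_s => b b_s.
  by case: (sSx b b_s) => // eb; rewrite eb (negbTE x_s) in b_s.
have remS b : b \in rem x s -> S b.
  rewrite (mem_rem_uniq _ us) inE => /andP[bx b_s].
  by case: (sSx b b_s) => // eb; rewrite eb eqxx in bx.
move: s0; rewrite (big_rem _ x_s) /=; have [px0 s0|px0 s0] := eqVneq (p x) 0.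
  move: s0; rewrite px0 pact0 add0r => s0; have [->//|ax] := eqVneq a x.
  by apply: (indS _ p (rem_uniq _ us) remS s0); rewrite (mem_rem_uniq _ us) inE ax.
case: norep; exists (p x), (rem x s), (fun b => if b \in rem x s then - p b else 0).
split=> //; [exact: rem_uniq | by move=> b /negbTE -> |].
rewrite big_seq (eq_bigr (fun b => - pact T (p b) b)) => [|b ->]; last by rewrite pactN.
by rewrite sumrN -big_seq; apply/eqP; rewrite -addr_eq0 s0.
Qed.

End MaximalIndependent.

Section Coordinates.
Variables (k : fieldType) (X : lmodType k) (T : {linear X -> X}) (S : set X).
Hypothesis indS : independent T S.
Hypothesis spanS : forall x, exists q s p, represents T S x q s p.

Lemma represents_big r x q s p u :
  represents T S x q s p -> uniq u -> {subset s <= u} ->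
  pact T (r * q) x = \sum_(a <- u) pact T (r * p a) a.
Proof.
case=> _ us _ ps e uu su; rewrite pactM e linear_sum.
rewrite (big_uniq_widen us uu su) => [|a /ps ->]; last by rewrite mulr0 pact0.
by apply: eq_bigr => a _; rewrite pactM.
Qed.

Lemma represents_unique x q s p q' s' p' :
  represents T S x q s p -> represents T S x q' s' p' ->
  forall a, q' * p a = q * p' a.
Proof.
move=> r r' a; set u := undup (s ++ s').
have su : {subset s <= u} by move=> b b_s; rewrite mem_undup mem_cat b_s.
have su' : {subset s' <= u} by move=> b b_s; rewrite mem_undup mem_cat b_s orbT.
have [_ _ sS ps _] := r; have [_ _ sS' ps' _] := r'.
have uS b : b \in u -> S b by rewrite mem_undup mem_cat => /orP[/sS|/sS'].
have : \sum_(b <- u) pact T (q' * p b - q * p' b) b = 0.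
  under eq_bigr => b _ do rewrite pactB.
  by rewrite sumrB -(represents_big q' r) -?(represents_big q r') ?undup_uniq // mulrC subrr.
move/(indS (undup_uniq _) uS) => eq_p.
have [au|au] := boolP (a \in u); first by apply/eqP; rewrite -subr_eq0 eq_p.
by rewrite ps ?ps' ?mulr0 //; apply: contra au; [apply: su' | apply: su].
Qed.

Lemma represents_linear c x y q s p q' s' p' :
  represents T S x q s p -> represents T S y q' s' p' ->
  represents T S (c *: x + y) (q * q') (undup (s ++ s'))
    (fun a => c *: (q' * p a) + q * p' a).
Proof.
move=> r r'; have [q0 us sS ps _] := r; have [q0' us' sS' ps' _] := r'.
have su : {subset s <= undup (s ++ s')}.
  by move=> b b_s; rewrite mem_undup mem_cat b_s.
have su' : {subset s' <= undup (s ++ s')}.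
  by move=> b b_s; rewrite mem_undup mem_cat b_s orbT.
split; [exact: mulf_neq0 | exact: undup_uniq | | |].
- by move=> b; rewrite mem_undup mem_cat => /orP[/sS|/sS'].
- move=> b; rewrite mem_undup mem_cat negb_or => /andP[b_s b_s'].
  by rewrite ps // ps' // !mulr0 scaler0 addr0.
under [RHS]eq_bigr => b _ do rewrite pactD pactZ.
rewrite big_split -scaler_sumr linearP {1}(mulrC q).
by rewrite -(represents_big _ r (undup_uniq _) su) -(represents_big _ r' (undup_uniq _) su').
Qed.

Lemma represents_T x q s p :
  represents T S x q s p -> represents T S (T x) q s (fun a => 'X * p a).
Proof.
case=> q0 us sS ps e; split=> // [b /ps ->|]; first by rewrite mulr0.
by rewrite pact_comm e linear_sum; apply: eq_bigr => b _; rewrite pactXM.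
Qed.

Definition coord x a : {fraction {poly k}} :=
  let: exist q rq := cid (spanS x) in let: exist s rs := cid rq in
  let: exist p _ := cid rs in (p a)%:F / q%:F.

Lemma coordE x q s p : represents T S x q s p -> forall a, coord x a = (p a)%:F / q%:F.
Proof.
move=> r a; rewrite /coord; case: (cid (spanS x)) => q0 rq.
case: (cid rq) => s0 rs; case: (cid rs) => p0 r0.
have [q00 _ _ _ _] := r0; have [q0' _ _ _ _] := r.
apply/eqP; rewrite eqr_div ?tofrac_eq0 // -!tofracM tofrac_eq.
by rewrite mulrC (represents_unique r0 r) mulrC.
Qed.

Lemma coord_linear c x y :
  coord (c *: x + y) = (fun a => rscale c (coord x a) + coord y a).
Proof.
have [q [s [p r]]] := spanS x; have [q' [s' [p' r']]] := spanS y.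
have [q0 _ _ _ _] := r; have [q0' _ _ _ _] := r'.
apply: funext => a; rewrite (coordE (represents_linear c r r')) !(coordE r) !(coordE r').
rewrite /rscale /poly2rat -mul_polyC tofracD !tofracM.
rewrite [in RHS]mulrA addf_div ?tofrac_eq0 //.
by rewrite (mulrC q'%:F) mulrA (mulrC q%:F).
Qed.


Lemma coordT x : coord (T x) = MA (coord x).
Proof.
have [q [s [p r]]] := spanS x; apply: funext => a.
by rewrite /MA /Mop /poly2rat (coordE (represents_T r)) (coordE r) tofracM mulrA.
Qed.

Lemma coord0 : coord 0 = fun _ => 0.
Proof.
have r0 : represents T S 0 1 [::] (fun _ => 0).
  by split=> //; [exact: oner_neq0 | rewrite linear0 big_nil].
by apply: funext => a; rewrite (coordE r0) tofrac0 mul0r.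
Qed.

Lemma coord_finsupp x : finsupp (coord x).
Proof.
have [q [s [p r]]] := spanS x; exists s => a; rewrite (coordE r a).
have [a_s _|a_s] := boolP (a \in s); first exact: mem_In.
by have [_ _ _ ps _] := r; rewrite ps // tofrac0 mul0r.
Qed.

Lemma coord_inj : torsion_free T -> injective coord.
Proof.
move=> tf x y exy; apply/eqP; rewrite -subr_eq0; apply/eqP.
have [q [s [p r]]] := spanS (x - y); have [q0 _ _ _ e] := r.
apply: (tf q _ q0); rewrite e big1 // => a _.
have := congr1 (fun f => f a) (coord_linear (-1) y x).
rewrite exy scaleN1r addrC (coordE r) /rscale /poly2rat polyCN tofracN tofrac1 mulN1r addNr.
move/eqP; rewrite mulf_eq0 invr_eq0 !tofrac_eq0 (negbTE q0) orbF => /eqP ->.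
exact: pact0.
Qed.

End Coordinates.

Section Intertwining.
Variables (k : fieldType) (X : lmodType k) (T : {linear X -> X}).
Variables (A : Type) (J : X -> A -> {fraction {poly k}}).
Hypothesis J_linear :
  forall c x y, J (c *: x + y) = (fun a => rscale c (J x a) + J y a).
Hypothesis J_T : forall x, J (T x) = MA (J x).

Lemma intertwining0 : J 0 = fun _ => 0.
Proof.
apply: funext => a; have /(congr1 (fun f => f a)) := J_linear 1 0 0.
rewrite scale1r addr0 /rscale /poly2rat polyC1 tofrac1 mul1r.
by move/(congr1 (fun z => z - J 0 a)); rewrite addrK subrr.
Qed.

Lemma intertwiningD x y a : J (x + y) a = J x a + J y a.
Proof.
rewrite -[x]scale1r J_linear /rscale /poly2rat polyC1 tofrac1 mul1r.
by rewrite scale1r.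
Qed.

Lemma intertwiningZ c x a : J (c *: x) a = (c%:P)%:F * J x a.
Proof. by rewrite -[c *: x]addr0 J_linear intertwining0 addr0. Qed.

Lemma intertwining_pact p x a : J (pact T p x) a = p%:F * J x a.
Proof.
elim/poly_ind: p x => [|p c IH] x; first by rewrite pact0 intertwining0 mul0r.
rewrite pactD pactM -['X]mulr1 pactXM pact1 pactC intertwiningD IH intertwiningZ.
by rewrite J_T /MA /Mop /poly2rat mulr1 tofracD tofracM mulrDl mulrA.
Qed.

Lemma intertwining_torsion_free : injective J -> torsion_free T.
Proof.
move=> J_inj p x p0 px; apply: J_inj; rewrite intertwining0; apply: funext => a.
have := intertwining_pact p x a; rewrite px intertwining0 => /esym/eqP.
by rewrite mulf_eq0 tofrac_eq0 (negbTE p0) => /eqP.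
Qed.

End Intertwining.

Theorem theorem1p4 (k : fieldType) (X : lmodType k) (T : {linear X -> X}) :
  (~ exists L : X -> Prop,
       [/\ is_subspace L, nontrivial L, fin_dim L & @is_invariant X (fun x : X => T x) L])
  <->
  (exists (A : Type) (Y : (A -> {fraction {poly k}}) -> Prop)
          (J : X -> A -> {fraction {poly k}}),
     [/\ is_subspace_RA Y /\ is_invariant (@MA k A) Y,
         (forall (c : k) x y, J (c *: x + y) = (fun a => rscale c (J x a) + J y a)),
         (forall x, Y (J x)) /\ (forall f, Y f -> exists x, J x = f),
         (forall x y, J x = J y -> x = y) &
         (forall x, J (T x) = MA (J x))]).
Proof.
split=> [/torsion_free_of_no_invariant tf | [A [Y [J [_ J_lin _ J_inj J_T]]]]]; last first.
  exact/no_invariant_of_torsion_free/(intertwining_torsion_free J_lin J_T).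
have [S [indS maxS]] := exists_maximal_independent T.
have spanS := maximal_independent_represents indS maxS.
exists X, (fun f => exists x, coord spanS x = f), (coord spanS); split.
- split; [split; [|split] |].
  + by move=> _ [x <-]; exact: coord_finsupp.
  + by exists 0; exact: coord0.
  + by move=> c _ _ [x <-] [y <-]; exists (c *: x + y); exact: coord_linear.
  + by move=> _ [x <-]; exists (T x); exact: coordT.
- exact: coord_linear.
- by split=> [x|f //]; exists x.
- exact: coord_inj.
- exact: coordT.
Qed.
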